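(* Let $G$ be a finite group, let $p$ be a prime, and let $A$ be a subgroup of $G$ of maximum order among the self-centralizing subgroups of $G$ (i.e. among subgroups $B\le G$ with $C_G(B)=B$). Then: \begin{enumerate} \item If $G$ is abelian, then $\mathcal{CD}(G)=\{G\}$. \item If $|G:Z(G)|=p^2$, then $\mathcal{CD}(G)=\{Z(G),A,A_1,\dots,A_p,G\}$ is a quasi-antichain of width $p+1$, with each $A_i$ abelian. \item If $|G:A|=p$ and $|G:Z(G)|=p^i$ with $i>2$, then $\mathcal{CD}(G)=\{A\}$. Also, if $p$ is the smallest prime divisor of $|G|$, $|G:A|=p$ and $|G:Z(G)|>p^2$, then $\mathcal{CD}(G)=\{A\}$. \item Suppose $|G:A|=p^2$. \begin{enumerate} \item If $|G:Z(G)|=p^3$, then $\mathcal{CD}(G)=\{Z(G),G\}$. Also, if $p$ is the smallest prime divisor of $|G|$ and $p^2<|G:Z(G)|<p^4$, then $\mathcal{CD}(G)=\{Z(G),G\}$. \item If $|G:Z(G)|=p^4$, then $$\mathcal{CD}(G)=\{Z(G),Z(T_1),\dots,Z(T_n),A,A_1,\dots,A_m,T_1,\dots,T_n,G\},$$ where $T_1,\dots,T_n$ ($n\ge 0$) are all of the subgroups of index $p$ in $G$ whose centers have index $p^3$ in $G$, and $A_1,\dots,A_m$ ($m\ge 0$) are all of the subgroups of index $p^2$ in $G$, other than $A$, whose centralizers in $G$ have index $p^2$ in $G$. Furthermore, if $n\ge 1$ then $m\ge p$. \item If $|G:Z(G)|=p^i$ with $i>4$ and $G$ possesses a subgroup $T$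 of index $p$ in $G$ whose center has index $p^3$ in $G$, then $\mathcal{CD}(G)=\{Z(T),A,A_1,\dots,A_p,T\}$ is a quasi-antichain of width $p+1$, with each $A_i$ abelian. Also, if $p$ is the smallest prime divisor of $|G|$, $|G:Z(G)|>p^4$, and $G$ possesses a subgroup $T$ of index $p$ in $G$ whose center has index $p^3$ in $G$, then $\mathcal{CD}(G)=\{Z(T),A,A_1,\dots,A_p,T\}$ is a quasi-antichain of width $p+1$, with each $A_i$ abelian. \item If $|G:Z(G)|=p^i$ with $i>4$ and $G$ does not possess a subgroup of index $p$ in $G$ whose center has index $p^3$ in $G$, then $\mathcal{CD}(G)=\{A\}$. Also, if $p$ is the smallest prime divisor of $|G|$, $|G:Z(G)|>p^4$, and $G$ does not possess a subgroup of index $p$ in $G$ whose center has index $p^3$ in $G$, then $\mathcal{CD}(G)=\{A\}$. \end{enumerate} \end{enumerate}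
   Context: For a finite group $G$ and $H\le G$, the Chermak-Delgado measure is $m_G(H)=|H|\,|C_G(H)|$. Let $m^*(G)=\max\{m_G(H)\mid H\le G\}$ and $\mathcal{CD}(G)=\{H\le G\mid m_G(H)=m^*(G)\}$, the Chermak-Delgado lattice of $G$ (a sublattice of the subgroup lattice of $G$). A lattice is a quasi-antichain of width $w$ if it consists of a least element, a greatest element, and $w$ further pairwise incomparable elements. *)

From mathcomp Require Import all_boot all_fingroup all_solvable.
Set Implicit Arguments. Unset Strict Implicit. Unset Printing Implicit Defensive.
Local Open Scope group_scope.

Definition cdm (gT : finGroupType) (G H : {set gT}) : nat :=
  #|H| * #|'C_G(H)|.

Definition cdmax (gT : finGroupType) (G : {set gT}) : nat :=
  \max_(H : {group gT} | H \subset G) cdm G H.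

Definition CD (gT : finGroupType) (G : {set gT}) : {set {set gT}} :=
  [set H : {set gT} | [&& group_set H, H \subset G & cdm G H == cdmax G]].

Definition max_selfcent (gT : finGroupType) (G A : {group gT}) : Prop :=
  [/\ A \subset G, 'C_G(A) = A &
      forall B : {group gT}, B \subset G -> 'C_G(B) = B -> #|B| <= #|A|].

Definition quasi_antichain (T : finType) (L : {set {set T}}) (w : nat) : Prop :=
  exists bot top : {set T},
    [/\ bot \in L, top \in L, bot != top &
        (forall X, X \in L -> (bot \subset X) && (X \subset top))] /\
    #|L| = w + 2 /\
        (forall X Y, X \in L -> Y \in L ->
           X != bot -> X != top -> Y != bot -> Y != top ->
           X \subset Y -> X = Y).

Definition smallest_prime_div (p n : nat) : Prop :=
  [/\ prime p, p %| n & forall q, prime q -> q %| n -> p <= q].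

Definition Tsubs (gT : finGroupType) (G : {set gT}) (p : nat) : {set {set gT}} :=
  [set T : {set gT} | [&& group_set T, T \subset G, #|G : T| == p
                         & #|G : 'Z(T)| == (p ^ 3)%N]].

Definition Asubs (gT : finGroupType) (G A : {set gT}) (p : nat) : {set {set gT}} :=
  [set B : {set gT} | [&& group_set B, B \subset G, B != A,
                         #|G : B| == (p ^ 2)%N & #|G : 'C_G(B)| == (p ^ 2)%N]].

(* Since m_G(H) |G : H| |G : C_G(H)| = |G|^2, the Chermak-Delgado lattice
   consists of the subgroups H minimising cdindex G H = |G : H| |G : C_G(H)|,
   all of which contain Z(G); Z(G) and G have cdindex |G : Z(G)|, and A has
   cdindex |G : A|^2.
   If |G : A| = p^2 and every prime divisor of |G : Z(G)| is at least p, then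
   abelian subgroups have index at least p^2, so every H strictly between Z(G)
   and G has cdindex at least p^4, with equality exactly when H is abelian
   self-centralizing of index p^2, H has index p and |G : Z(H)| = p^3, H is
   the centre of such a subgroup, or |G : H| = |G : C_G(H)| = p^2 and
   |G : Z(G)| = p^4.  Comparing with |G : Z(G)|, and using that the lattice is
   closed under meets and joins, gives part 4.  When |Y : Z(Y)| = p^2, the
   subgroups strictly between Z(Y) and Y are the p + 1 abelian groups
   Z(Y)<y>, which gives the quasi-antichains of parts 2 and 4.
   If |G : A| = p, a subgroup H other than A either lies in A, so that C_G(H)
   is A or G, or generates G with A, so that A :&: C_G(H) is central; when
   |G : Z(G)| > p^2 each case forces cdindex G H > p^2 (part 3). *)

From mathcomp Require Import all_boot all_fingroup all_solvable zify.
Set Implicit Arguments. Unset Strict Implicit. Unset Printing Implicit Defensive.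
Local Open Scope group_scope.

Definition prime_divs_ge (p n : nat) := forall q, prime q -> q %| n -> p <= q.

Lemma prime_divs_ge_dvd p m n : prime_divs_ge p n -> m %| n -> prime_divs_ge p m.
Proof. by move=> pn mn q q_pr qm; apply: pn (dvdn_trans qm mn). Qed.

Lemma prime_divs_ge_pow p i : prime p -> prime_divs_ge p (p ^ i).
Proof.
by move=> p_pr q q_pr; rewrite Euclid_dvdX // dvdn_prime2 // => /andP[/eqP->].
Qed.

Lemma prime_divs_ge_leq p d : 1 < d -> prime_divs_ge p d -> p <= d.
Proof.
move=> d_gt1 pd; apply: leq_trans (pdiv_leq (ltnW d_gt1)).
exact: pd (pdiv_prime d_gt1) (pdiv_dvd d).
Qed.

Lemma prime_divs_ge_prime p d : 1 < d < p ^ 2 -> prime_divs_ge p d -> prime d.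
Proof.
case/andP=> d_gt1 d_lt pd; have q_pr := pdiv_prime d_gt1.
have [c def_d] := dvdnP (pdiv_dvd d).
have [c_le1 | c_gt1] := leqP c 1.
  by move: d_gt1; rewrite {}def_d; case: c c_le1 => [|[|]] // _; rewrite ?mul0n ?mul1n.
have c_dvd_d : c %| d by rewrite def_d dvdn_mulr.
have p_le_c := prime_divs_ge_leq c_gt1 (prime_divs_ge_dvd pd c_dvd_d).
have p_le_q := pd _ q_pr (pdiv_dvd d).
by move: d_lt; rewrite def_d (expnS p 1) expn1 ltnNge leq_mul.
Qed.

Lemma prime_sq_factors p a b :
  prime p -> (a * b = p ^ 2)%N -> 1 < a -> 1 < b -> a = p /\ b = p.
Proof.
move=> p_pr eab a_gt1 b_gt1; have p_gt1 := prime_gt1 p_pr.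
have /(dvdn_pfactor _ _ p_pr)[k k_le2 def_a] : a %| p ^ 2 by rewrite -eab dvdn_mulr.
move: eab a_gt1; rewrite def_a (expnS p 1) expn1.
by case: k k_le2 {def_a} => [|[|[|]]] // _ eab _; rewrite ?expn1 ?(expnS p 1) ?expn1; nia.
Qed.

Lemma leq_mul_eq m1 m2 n1 n2 : 0 < m1 -> 0 < m2 -> m1 <= n1 -> m2 <= n2 ->
  (n1 * n2 = m1 * m2)%N -> n1 = m1 /\ n2 = m2.
Proof. by move=> *; split; nia. Qed.

Definition cdindex (gT : finGroupType) (G H : {set gT}) : nat :=
  #|G : H| * #|G : 'C_G(H)|.

Section SubgroupFacts.
Variable gT : finGroupType.
Implicit Types G H K M X Y W : {group gT}.

Lemma prime_index_between M H G :
  M \subset H -> H \subset G -> prime #|G : M| -> H :=: M \/ H :=: G.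
Proof.
move=> sMH sHG /(p_index_maximal (subset_trans sMH sHG)) maxM.
have : maximal_eq M G by rewrite /maximal_eq maxM orbT.
by case/maximal_eqP => _; apply.
Qed.

Lemma eq_index_subg X Y G :
  X \subset Y -> Y \subset G -> #|G : X| = #|G : Y| -> X :=: Y.
Proof.
move=> sXY sYG eXY; apply/eqP; rewrite eqEcard sXY -(leq_pmul2r (indexg_gt0 G X)).
by rewrite (Lagrange (subset_trans sXY sYG)) eXY (Lagrange sYG) leqnn.
Qed.

Lemma card_mul_leq X Y W : X * Y \subset W -> #|X| * #|Y| <= #|W| * #|X :&: Y|.
Proof. by move=> sXYW; rewrite mul_cardG leq_mul2r subset_leq_card ?orbT. Qed.

Lemma center_subcent H G : H \subset G -> 'Z(H) = H :&: 'C_G(H).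
Proof. by move=> sHG; rewrite setIA (setIidPl sHG). Qed.

Lemma center_sub_subcent H G : H \subset G -> 'Z(G) \subset 'C_G(H).
Proof. by move=> sHG; rewrite setIS // centS. Qed.

Lemma subcent_eq_center H G : H \subset G -> 'C_G(H) = G -> H \subset 'Z(G).
Proof. by move=> sHG cGH; rewrite subsetI sHG centsC -{1}cGH subsetIr. Qed.

Lemma center_sub_center H G : 'Z(G) \subset H -> H \subset G -> 'Z(G) \subset 'Z(H).
Proof.
by move=> sZH sHG; rewrite subsetI sZH; apply: subset_trans (subsetIr _ _) (centS sHG).
Qed.

Lemma subcent_center G : 'C_G('Z(G)) = G.
Proof. by apply/setIidPl; rewrite centsC subsetIr. Qed.

Lemma subcent_join G H K : 'C_G(H <*> K) = 'C_G(H) :&: 'C_G(K).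
Proof. by rewrite centY (setIIr G). Qed.

Lemma mem_group_set (S : {set {set gT}}) (W : {set gT}) :
  (forall V : {set gT}, V \in S -> group_set V) -> W \in S ->
  exists2 H : {group gT}, W = H & gval H \in S.
Proof. by move=> gS SW; exists (Group (gS W SW)). Qed.

Lemma exists_group_enum (S : {set {set gT}}) n :
  #|S| = n -> (forall V : {set gT}, V \in S -> group_set V) ->
  exists f : 'I_n -> {group gT}, [set gval (f i) | i : 'I_n] = S.
Proof.
move=> cardS gS.
exists (fun i => Group (gS _ (enum_valP (cast_ord (esym cardS) i)))).
apply/setP => V; apply/imsetP/idP => [[i _ ->] | SV] /=; first exact: enum_valP.
by exists (cast_ord cardS (enum_rank_in SV V)); rewrite //= cast_ordK enum_rankK_in.
Qed.

End SubgroupFacts.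

Section ChermakDelgado.
Variable gT : finGroupType.
Implicit Types G H K X : {group gT}.

Lemma cdm_cdindex G H : H \subset G -> (cdm G H * cdindex G H = #|G| * #|G|)%N.
Proof. by move=> sHG; rewrite /cdm /cdindex mulnACA !Lagrange ?subsetIl. Qed.

Lemma cdm_gt0 G H : 0 < cdm G H.
Proof. by rewrite muln_gt0 !cardG_gt0. Qed.

Lemma cdindex_gt0 G (H : {set gT}) : 0 < cdindex G H.
Proof. by rewrite muln_gt0 !indexg_gt0. Qed.

Lemma leq_cdm G H K : H \subset G -> K \subset G ->
  (cdm G H <= cdm G K) = (cdindex G K <= cdindex G H).
Proof.
move=> sHG sKG; have eH := cdm_cdindex sHG; have eK := cdm_cdindex sKG.
have cH0 := cdm_gt0 G H; have cK0 := cdm_gt0 G K.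
have iH0 := cdindex_gt0 G H; have iK0 := cdindex_gt0 G K.
by apply/idP/idP; nia.
Qed.

Lemma eq_cdm G H K : H \subset G -> K \subset G ->
  (cdm G H == cdm G K) = (cdindex G H == cdindex G K).
Proof. by move=> sHG sKG; rewrite !eqn_leq !leq_cdm // andbC. Qed.

Lemma cdm_le_cdmax G H : H \subset G -> cdm G H <= cdmax G.
Proof.
move=> sHG; pose P (K : {group gT}) := K \subset G.
exact: (@leq_bigmax_cond _ P (fun K : {group gT} => cdm G K) H).
Qed.

Lemma cdm_lt_joinZ G H : H \subset G -> ~~ ('Z(G) \subset H) ->
  cdm G H < cdm G (H <*> 'Z(G)).
Proof.
move=> sHG nZH; rewrite /cdm subcent_join subcent_center (setIidPl (subsetIl _ _)).
rewrite ltn_pmul2r ?cardG_gt0 // proper_card // properEneq joing_subl andbT.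
by apply: contraNneq nZH => ->; apply: joing_subr.
Qed.

Lemma CD_center_sub G H : H \subset G -> cdm G H = cdmax G -> 'Z(G) \subset H.
Proof.
move=> sHG cdH; apply/contraT => nZH; have := cdm_lt_joinZ sHG nZH.
by rewrite cdH ltnNge cdm_le_cdmax // join_subG sHG center_sub.
Qed.

Lemma CD_by_cdindex G (m : nat) (L : {set {set gT}}) :
  (forall H, 'Z(G) \subset H -> H \subset G -> m <= cdindex G H) ->
  (forall H, 'Z(G) \subset H -> H \subset G -> cdindex G H = m -> gval H \in L) ->
  (forall Y : {set gT}, Y \in L ->
     exists2 H : {group gT}, Y = H & H \subset G /\ cdindex G H = m) ->
  L != set0 -> CD G = L.
Proof.
move=> ge_m in_L L_cd /set0Pn[_ /L_cd[H0 _ [sH0G iH0]]].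
have le_H0 (H : {group gT}) : 'Z(G) \subset H -> H \subset G -> cdm G H <= cdm G H0.
  by move=> sZH sHG; rewrite leq_cdm // iH0 ge_m.
have cdmax_H0 : cdmax G = cdm G H0.
  apply/eqP; rewrite eqn_leq cdm_le_cdmax // andbT; apply/bigmax_leqP => H sHG.
  have [sZH|nZH] := boolP ('Z(G) \subset H); first exact: le_H0.
  apply: ltnW (leq_trans (cdm_lt_joinZ sHG nZH) (le_H0 _ (joing_subr _ _) _)).
  by rewrite join_subG sHG center_sub.
apply/setP => Y; rewrite inE.
have [gY | ngY] := boolP (group_set Y); last first.
  by apply/esym/negbTE; apply: contra ngY => /L_cd[H -> _]; apply: groupP.
have [H ->] : exists H : {group gT}, Y = H by exists (Group gY).
rewrite /=; apply/andP/idP => [[sHG /eqP cdH] | /L_cd[K eHK [sKG iK]]].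
  apply: (in_L H) (CD_center_sub sHG cdH) (sHG) _; apply/eqP.
  by rewrite -iH0 -eq_cdm // cdH cdmax_H0.
by rewrite eHK sKG cdmax_H0 eq_cdm // iK iH0.
Qed.

Lemma cdm_meet_join G H K : H \subset G -> K \subset G ->
  cdm G H * cdm G K <= cdm G (H :&: K) * cdm G (H <*> K).
Proof.
move=> sHG sKG; rewrite /cdm mulnACA [X in _ <= X]mulnACA subcent_join.
apply: leq_mul.
  by rewrite [X in _ <= X]mulnC card_mul_leq // mul_subG ?joing_subl ?joing_subr.
by rewrite card_mul_leq // mul_subG // setIS // centS ?subsetIl ?subsetIr.
Qed.

Lemma cdindex_meet_join G H K : H \subset G -> K \subset G ->
  cdindex G (H :&: K) * cdindex G (H <*> K) <= cdindex G H * cdindex G K.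
Proof.
move=> sHG sKG; have sIG : H :&: K \subset G by rewrite subIset ?sHG.
have sJG : H <*> K \subset G by rewrite join_subG sHG sKG.
move: (cdm_meet_join sHG sKG) (cdm_gt0 G H) (cdm_gt0 G K).
move: (cdm_cdindex sHG) (cdm_cdindex sKG) (cdm_cdindex sIG) (cdm_cdindex sJG).
move: (cdm G H) (cdm G K) (cdm G (H :&: K)) (cdm G (H <*> K)) => cH cK cI cJ.
move=> eH eK eI eJ supermod cH0 cK0.
have cHK0 : 0 < cH * cK by rewrite muln_gt0 cH0.
rewrite -(leq_pmul2r cHK0).
apply: leq_trans (leq_mul (leqnn _) supermod) _.
by rewrite mulnACA [X in _ <= X]mulnACA ![(cdindex _ _ * _)%N]mulnC eH eK eI eJ.
Qed.

Lemma cdindex_min_meet_join G (m : nat) H K :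
    (forall X, 'Z(G) \subset X -> X \subset G -> m <= cdindex G X) ->
    'Z(G) \subset H -> H \subset G -> 'Z(G) \subset K -> K \subset G ->
    cdindex G H = m -> cdindex G K = m ->
  cdindex G (H :&: K) = m /\ cdindex G (H <*> K) = m.
Proof.
move=> ge_m sZH sHG sZK sKG iH iK.
have sIG : H :&: K \subset G by rewrite subIset ?sHG.
have sJG : H <*> K \subset G by rewrite join_subG sHG sKG.
have geI : m <= cdindex G (H :&: K) by apply: ge_m; rewrite // subsetI sZH.
have geJ : m <= cdindex G (H <*> K).
  by apply: ge_m; rewrite // (subset_trans sZH) ?joing_subl.
have := cdindex_meet_join sHG sKG; rewrite iH iK => le_mm.
have := cdindex_gt0 G (H :&: K); have := cdindex_gt0 G (H <*> K).
by split; nia.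
Qed.

Lemma cdindexG G : cdindex G G = #|G : 'Z(G)|.
Proof. by rewrite /cdindex indexgg mul1n. Qed.

Lemma cdindexZ G : cdindex G 'Z(G) = #|G : 'Z(G)|.
Proof. by rewrite /cdindex subcent_center indexgg muln1. Qed.

Lemma cdindex_mul_card G H : H \subset G ->
  (cdindex G H * #|(H * 'C_G(H))%g| = #|G| * #|G : 'Z(H)|)%N.
Proof.
move=> sHG; have sZG := subset_trans (center_sub H) sHG.
have eHK := mul_cardG H 'C_G(H); rewrite -(center_subcent sHG) in eHK.
have eG := cdm_cdindex sHG; rewrite /cdm in eG.
apply/eqP; rewrite -(eqn_pmul2r (cardG_gt0 'Z(H))) -mulnA -eHK mulnC eG.
by rewrite -mulnA [(#|G : _| * _)%N]mulnC (Lagrange sZG).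
Qed.

End ChermakDelgado.



Section MaxSelfCentralizing.
Variable gT : finGroupType.
Implicit Types G A B : {group gT}.

Lemma max_selfcentP G A : max_selfcent G A ->
  [/\ A \subset G, 'C_G(A) = A, abelian A & 'Z(G) \subset A].
Proof.
case=> sAG cA _; split=> //; first by rewrite abelianE -{1}cA subsetIr.
by rewrite -cA center_sub_subcent.
Qed.

Lemma abelian_sub_selfcent G B : B \subset G -> abelian B ->
  exists2 M : {group gT}, B \subset M & M \subset G /\ 'C_G(M) = M.
Proof.
move=> sBG aB; pose P (X : {group gT}) := (X \subset G) && abelian X.
have [M maxM sBM] := @maxgroup_exists _ P B (introT andP (conj sBG aB)).
have [/andP[sMG aM] maxMP] := maxgroupP maxM.
have sMC : M \subset 'C_G(M) by rewrite subsetI sMG.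
exists M => //; split=> //; apply/eqP; rewrite eqEsubset sMC andbT.
apply/subsetP => x /setIP[xG cMx].
have sMxG : P (M <*> <[x]>)%G.
  by rewrite /P join_subG sMG cycle_subG xG abelianY aM cycle_abelian cycle_subG.
by rewrite -(maxMP _ sMxG (joing_subl _ _)) mem_gen // inE cycle_id orbT.
Qed.

Lemma max_selfcent_abelian_index G A B : max_selfcent G A ->
  B \subset G -> abelian B -> #|G : A| <= #|G : B|.
Proof.
move=> [sAG _ maxA] sBG aB; have [M sBM [sMG cM]] := abelian_sub_selfcent sBG aB.
have le_BA : #|B| <= #|A| := leq_trans (subset_leq_card sBM) (maxA M sMG cM).
rewrite -(leq_pmul2l (cardG_gt0 B)) (Lagrange sBG) -{1}(Lagrange sAG).
by rewrite leq_mul2r le_BA orbT.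
Qed.

End MaxSelfCentralizing.

Definition between (gT : finGroupType) (X Y : {set gT}) : {set {set gT}} :=
  [set B : {set gT} | [&& group_set B, X \proper B & B \proper Y]].

Section Between.
Variable gT : finGroupType.
Implicit Types B X Y : {group gT}.

Lemma in_between X Y B : (gval B \in between X Y) = (X \proper B) && (B \proper Y).
Proof. by rewrite inE groupP. Qed.

Lemma between_cases X (H : {group gT}) Y : X \subset H -> H \subset Y ->
  [\/ gval H = X, gval H = Y | gval H \in between X Y].
Proof.
move=> sXH sHY; rewrite in_between !properEneq sXH sHY !andbT.
by case: eqVneq => [<- | nXH]; [constructor 1 | case: eqVneq => [| nHY]; constructor].
Qed.

Lemma between_group (X Y W : {set gT}) :
  W \in between X Y -> exists2 B : {group gT}, W = B & gval B \in between X Y.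
Proof. by apply: mem_group_set => V; rewrite inE => /and3P[]. Qed.

Variables (Y : {group gT}) (p : nat).
Hypotheses (p_pr : prime p) (iYZ : #|Y : 'Z(Y)| = (p ^ 2)%N).

Let p_gt1 : 1 < p. Proof. exact: prime_gt1. Qed.

Let nabY : ~~ abelian Y.
Proof.
apply/negP => /center_idP eZY; have := p_gt1.
by move: iYZ; rewrite eZY indexgg (expnS p 1) expn1; nia.
Qed.

Lemma between_center_index B :
  gval B \in between 'Z(Y) Y -> #|Y : B| = p /\ #|B : 'Z(Y)| = p.
Proof.
rewrite in_between !properE => /andP[/andP[sZB nBZ] /andP[sBY nYB]].
by apply: prime_sq_factors; rewrite ?indexg_gt1 ?Lagrange_index.
Qed.

Lemma center_cycle_abelian y : y \in Y -> abelian ('Z(Y) <*> <[y]>).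
Proof.
move=> Yy; rewrite abelianY center_abelian cycle_abelian cycle_subG /=.
by apply: subsetP (Yy); rewrite centsC subsetIr.
Qed.

Lemma center_cycle_between y :
  y \in Y :\: 'Z(Y) -> gval ('Z(Y) <*> <[y]>)%G \in between 'Z(Y) Y.
Proof.
case/setDP=> Yy nZy; rewrite in_between !properE joing_subl /=.
have sZyY : 'Z(Y) <*> <[y]> \subset Y by rewrite join_subG center_sub cycle_subG.
rewrite sZyY /=; apply/andP; split.
  by apply: contra nZy => /subsetP; apply; rewrite mem_gen // inE cycle_id orbT.
by apply: contra nabY => /abelianS; apply; apply: center_cycle_abelian.
Qed.

Lemma between_eq_center_cycle B y :
  gval B \in between 'Z(Y) Y -> y \in B :\: 'Z(Y) -> B :=: 'Z(Y) <*> <[y]>.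
Proof.
move=> ZBY /setDP[By nZy]; have [_ iBZ] := between_center_index ZBY.
have sZyB : 'Z(Y) <*> <[y]> \subset B.
  rewrite join_subG cycle_subG By andbT.
  by move: ZBY; rewrite in_between => /andP[/proper_sub].
have prBZ : prime #|B : 'Z(Y)| by rewrite iBZ.
have [eZy | //] := prime_index_between (joing_subl _ _) sZyB prBZ.
by case/negP: nZy; rewrite -eZy mem_gen // inE cycle_id orbT.
Qed.

Lemma between_abelian B : gval B \in between 'Z(Y) Y -> abelian B.
Proof.
move=> ZBY; have := ZBY; rewrite in_between.
case/andP=> /properP[_ [y By nZy]] /proper_sub sBY.
have BZy : y \in B :\: 'Z(Y) by rewrite inE nZy.
rewrite (between_eq_center_cycle ZBY BZy).
exact: center_cycle_abelian (subsetP sBY y By).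
Qed.

Lemma card_between_mem B : gval B \in between 'Z(Y) Y -> #|B| = (#|'Z(Y)| * p)%N.
Proof.
move=> ZBY; have [_ iBZ] := between_center_index ZBY.
by move: ZBY; rewrite in_between => /andP[/proper_sub sZB _]; rewrite -(Lagrange sZB) iBZ.
Qed.

Lemma card_between : #|between 'Z(Y) Y| = p.+1.
Proof.
set S := between 'Z(Y) Y; have sZY := center_sub Y.
(* The sets B :\: 'Z(Y), for B strictly between 'Z(Y) and Y, partition Y :\: 'Z(Y). *)
have partYZ : #|Y :\: 'Z(Y)| = (\sum_(W in S) #|W :\: 'Z(Y)|)%N.
  rewrite -sum1_card (partition_big (fun y => gval ('Z(Y) <*> <[y]>)%G) (mem S)) /=;
    last exact: center_cycle_between.
  apply: eq_bigr => _ /between_group[B -> ZBY]; rewrite -sum1_card; apply: eq_bigl => y /=.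
  apply/andP/idP => [[/setDP[_ nZy] /eqP <-] | BZy].
    by rewrite inE nZy mem_gen // inE cycle_id orbT.
  rewrite -(between_eq_center_cycle ZBY BZy); split=> //.
  have [By nZy] := setDP BZy; rewrite inE nZy.
  by move: ZBY; rewrite in_between => /andP[_ /proper_sub/subsetP->].
have sumS : (\sum_(W in S) #|W :\: 'Z(Y)| = #|S| * (#|'Z(Y)| * p - #|'Z(Y)|))%N.
  rewrite -sum_nat_const; apply: eq_bigr => _ /between_group[B -> ZBY].
  rewrite cardsD card_between_mem // (setIidPr _) //.
  by move: ZBY; rewrite in_between => /andP[/proper_sub].
have cardYZ : #|Y :\: 'Z(Y)| = (#|'Z(Y)| * p ^ 2 - #|'Z(Y)|)%N.
  by rewrite cardsD (setIidPr sZY) -iYZ Lagrange.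
have Z_gt0 : 0 < #|'Z(Y)| := cardG_gt0 _; have := p_gt1.
by move: cardYZ; rewrite partYZ sumS (expnS p 1) expn1; nia.
Qed.

Lemma quasi_antichain_between :
  quasi_antichain ('Z(Y) |: (gval Y |: between 'Z(Y) Y)) p.+1.
Proof.
have nZY : 'Z(Y) != Y :> {set gT} by apply: contra nabY => /eqP/center_idP.
have nZS : 'Z(Y) \notin between 'Z(Y) Y by rewrite in_between properxx.
have nYS : gval Y \notin between 'Z(Y) Y by rewrite in_between properxx andbF.
exists 'Z(Y), (gval Y); split; [split | split].
- by rewrite !inE eqxx.
- by rewrite !inE eqxx orbT.
- exact: nZY.
- move=> W; rewrite !in_setU1 => /or3P[/eqP-> | /eqP-> | /between_group[B -> ZBY]].
  + by rewrite subxx center_sub.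
  + by rewrite center_sub subxx.
  + by move: ZBY; rewrite in_between => /andP[/proper_sub-> /proper_sub->].
- rewrite !cardsU1 !in_setU1 (negbTE nZY) (negbTE nZS) (negbTE nYS) card_between /=.
  by rewrite add1n add1n addn2.
- move=> W1 W2; rewrite !in_setU1 => W1L W2L nW1Z nW1Y nW2Z nW2Y.
  move: W1L W2L; rewrite (negbTE nW1Z) (negbTE nW1Y) (negbTE nW2Z) (negbTE nW2Y) /=.
  move=> /between_group[B1 -> ZB1Y] /between_group[B2 -> ZB2Y] sB12.
  by apply/eqP; rewrite eqEcard sB12 (card_between_mem ZB1Y) (card_between_mem ZB2Y) leqnn.
Qed.

Lemma CD_between_shape (L : {set {set gT}}) (A : {group gT}) :
    L = 'Z(Y) |: (gval Y |: between 'Z(Y) Y) -> gval A \in between 'Z(Y) Y ->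
  exists Ai : 'I_p -> {group gT},
    [/\ L = [set 'Z(Y); gval A; gval Y] :|: [set gval (Ai i) | i : 'I_p],
        quasi_antichain L p.+1 & forall i, abelian (Ai i)].
Proof.
move=> defL ZAY; have cardS : #|between 'Z(Y) Y :\ gval A| = p.
  by move: card_between; rewrite (cardsD1 (gval A)) ZAY => -[].
have [|Ai defAi] := exists_group_enum cardS.
  by move=> _ /setD1P[_ /between_group[B -> _]]; apply: groupP.
exists Ai; split; last 1 first.
- move=> i; have : gval (Ai i) \in between 'Z(Y) Y :\ gval A.
    by rewrite -defAi; apply/imsetP; exists i.
  by case/setD1P=> _; apply: between_abelian.
- rewrite defL defAi; apply/setP => W; rewrite !(in_setU1, in_setU, in_set1, in_setD1).
  by case: (eqVneq W A) => [-> | _]; rewrite ?ZAY ?orbT //=; case: (W == _).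
- by rewrite defL; apply: quasi_antichain_between.
Qed.

End Between.

Section CenterIndexBounds.
Variable gT : finGroupType.
Implicit Types G H K X Y : {group gT}.

Lemma prime_index_center_abelian X : prime #|X : 'Z(X)| -> abelian X.
Proof.
move=> prXZ; apply: cyclic_center_factor_abelian; apply: prime_cyclic.
by rewrite card_quotient ?normal_norm ?center_normal.
Qed.

Lemma prime_index_subcent_sub H G :
  'Z(G) \subset H -> H \subset G -> prime #|G : H| -> 'C_G(H) \subset H.
Proof.
(* Otherwise G = H C_G(H) and C_G(H) / Z(H) has prime order, so C_G(H) is
   abelian, hence central, hence inside H. *)
move=> sZH sHG prGH; set K := 'C_G(H); apply/contraT => nKH.
have sKG : K \subset G := subsetIl _ _; have cHK : K \subset 'C(H) := subsetIr _ _.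
have sHKG : H <*> K \subset G by rewrite join_subG sHG sKG.
have [/= eHK | /= eHKG] := prime_index_between (joing_subl H K) sHKG prGH.
  by case/negP: nKH; rewrite -eHK joing_subr.
have sZHZK : 'Z(H) \subset 'Z(K).
  rewrite subsetI (center_subcent sHG) subsetIr centsC.
  exact: subset_trans cHK (centS (subsetIl _ _)).
have iKZH : #|K : 'Z(H)| = #|G : H|.
  by rewrite (center_subcent sHG) setIC indexgI -indexMg -(cent_joinEr cHK) eHKG.
have aK : abelian K.
  apply: cyclic_factor_abelian (sZHZK) _; apply: prime_cyclic.
  by rewrite card_quotient ?iKZH ?normal_norm ?sub_center_normal.
have sKZ : K \subset 'Z(G).
  by rewrite subsetI sKG -eHKG centY subsetI cHK.
by case/negP: nKH; apply: subset_trans sKZ sZH.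
Qed.

Lemma prime_index_center_cent (T G : {group gT}) : T \subset G -> prime #|G : T| ->
  ~~ ('Z(T) \subset 'Z(G)) -> 'C_G(T) = 'Z(T) /\ 'C_G('Z(T)) = T.
Proof.
move=> sTG prT nZTZ; have sZTG := subset_trans (center_sub T) sTG.
have sTC : T \subset 'C_G('Z(T)) by rewrite subsetI sTG centsC subsetIr.
have [eCZ | eCZG] := prime_index_between sTC (subsetIl _ _) prT; last first.
  by case/negP: nZTZ; apply: subcent_eq_center.
split=> //; suff sCT : 'C_G(T) \subset T by rewrite (center_subcent sTG) (setIidPr sCT).
apply/contraT => nCT.
have sTCG : T <*> 'C_G(T) \subset G by rewrite join_subG sTG subsetIl.
have [/= eTC | /= eTCG] := prime_index_between (joing_subl T 'C_G(T)) sTCG prT.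
  by case/negP: nCT; have := joing_subr T 'C_G(T); rewrite eTC.
case/negP: nZTZ; rewrite subsetI sZTG -eTCG centY subsetI subsetIr centsC.
exact: subset_trans (subsetIr _ _) (centS (center_sub T)).
Qed.

Variables (G : {group gT}) (p : nat).
Hypothesis pZ : prime_divs_ge p #|G : 'Z(G)|.

Lemma index_dvd_center_index X Y :
  'Z(G) \subset X -> X \subset Y -> Y \subset G -> #|Y : X| %| #|G : 'Z(G)|.
Proof.
move=> sZX sXY sYG; rewrite -(Lagrange_index (subset_trans sXY sYG) sZX).
by rewrite -(Lagrange_index sYG sXY) dvdn_mulr // dvdn_mull.
Qed.

Lemma p_leq_index X Y : 'Z(G) \subset X -> X \subset Y -> Y \subset G ->
  ~~ (Y \subset X) -> p <= #|Y : X|.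
Proof.
move=> sZX sXY sYG nYX; rewrite prime_divs_ge_leq ?indexg_gt1 //.
exact: prime_divs_ge_dvd pZ (index_dvd_center_index sZX sXY sYG).
Qed.

Lemma psq_leq_center_index X : 'Z(G) \subset X -> X \subset G -> ~~ abelian X ->
  p ^ 2 <= #|X : 'Z(X)|.
Proof.
move=> sZX sXG nabX; rewrite leqNgt; apply: contra nabX => lt_XZ.
have sZZ := center_sub_center sZX sXG.
have pXZ := prime_divs_ge_dvd pZ (index_dvd_center_index sZZ (center_sub X) sXG).
have [XZ_le1 | XZ_gt1] := leqP #|X : 'Z(X)| 1.
  have : #|X : 'Z(X)| == 1%N by rewrite eqn_leq XZ_le1 indexg_gt0.
  by rewrite indexg_eq1 => /abelianS; apply; apply: center_abelian.
by apply: prime_index_center_abelian; apply: prime_divs_ge_prime pXZ; rewrite XZ_gt1.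
Qed.

Lemma psq_leq_index X : 'Z(G) \subset X -> X \subset G -> ~~ (G \subset X) ->
  ~~ prime #|G : X| -> p ^ 2 <= #|G : X|.
Proof.
move=> sZX sXG nGX; apply: contraR; rewrite -ltnNge => lt_GX.
apply: prime_divs_ge_prime (prime_divs_ge_dvd pZ (index_dvd_center_index sZX sXG _)) => //.
by rewrite indexg_gt1 nGX.
Qed.

End CenterIndexBounds.

Section CDIndexLowerBound.
Local Open Scope nat_scope.
Variable gT : finGroupType.
Implicit Types B H K : {group gT}.
Variables (G : {group gT}) (p : nat).
Hypotheses (p_pr : prime p) (pZ : prime_divs_ge p #|G : 'Z(G)|).
Hypothesis abelian_index : forall B, B \subset G -> abelian B -> p ^ 2 <= #|G : B|.

Let p_gt0 : 0 < p. Proof. exact: prime_gt0. Qed.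

Lemma cdindex_cent_sub_cases H :
    'Z(G) \proper H -> H \proper G -> 'C_G(H) \subset H ->
  p ^ 4 <= cdindex G H /\
  (cdindex G H = p ^ 4 -> 'C_G(H) = H /\ #|G : H| = p ^ 2 \/ gval H \in Tsubs G p).
Proof.
rewrite !properE => /andP[sZH _] /andP[sHG nGH] sCH.
have eZH : 'Z(H) = 'C_G(H) by rewrite (center_subcent sHG) (setIidPr sCH).
have p4 : p ^ 4 = p * (p * p ^ 2) by rewrite -!expnS.
have p2_gt0 : 0 < p ^ 2 by rewrite expn_gt0 p_gt0.
have [aH | nabH] := boolP (abelian H).
  have eCH : 'C_G(H) = H by rewrite -eZH; apply/center_idP.
  have ge2 := abelian_index sHG aH.
  rewrite /cdindex eCH -[4]/(2 + 2) expnD; split=> [|eq4]; first exact: leq_mul.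
  by left; split=> //; case: (leq_mul_eq p2_gt0 p2_gt0 ge2 ge2 eq4).
have ge1 := p_leq_index pZ sZH sHG (subxx G) nGH.
have ge2 := psq_leq_center_index pZ sZH sHG nabH.
have eGC : #|G : 'C_G(H)| = #|G : H| * #|H : 'Z(H)|.
  by rewrite -eZH Lagrange_index ?center_sub.
rewrite /cdindex eGC p4; split=> [|eq4]; first by rewrite !leq_mul.
have p3_gt0 : 0 < p * p ^ 2 by rewrite -expnS expn_gt0 p_gt0.
have [eGH eGHZ] := leq_mul_eq p_gt0 p3_gt0 ge1 (leq_mul ge1 ge2) eq4.
by right; rewrite inE groupP sHG eGH eZH eGC eGHZ -expnS !eqxx.
Qed.

Lemma cdindex_abelian_cases H :
    'Z(G) \proper H -> H \proper G -> abelian H -> ~~ ('C_G(H) \subset H) ->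
  p ^ 4 <= cdindex G H /\
  (cdindex G H = p ^ 4 -> 'C_G(H) \in Tsubs G p /\ gval H = 'Z('C_G(H))).
Proof.
(* C_G(H) contains its own centralizer, and |G : C_G(C_G(H))| <= |G : H|. *)
move=> ZH HG aH nCH; have [sZH nHZ] := andP ZH; have [sHG _] := andP HG.
have sKG : 'C_G(H) \subset G := subsetIl _ _.
have sHK : H \subset 'C_G(H) by rewrite subsetI sHG.
have ZK : 'Z(G) \proper 'C_G(H) := proper_sub_trans ZH sHK.
have KG : 'C_G(H) \proper G.
  rewrite properE sKG; apply: contra nHZ => sGK; apply: subcent_eq_center sHG _.
  by apply/eqP; rewrite eqEsubset sKG.
have sCKK : 'C_G('C_G(H)) \subset 'C_G(H) by rewrite setIS // centS.
have [ge4K eq4K] := cdindex_cent_sub_cases ZK KG sCKK.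
have sHCK : H \subset 'C_G('C_G(H)) by rewrite subsetI sHG centsC subsetIr.
have le_KH : cdindex G 'C_G(H) <= cdindex G H.
  rewrite /cdindex [X in _ <= X]mulnC leq_mul2l.
  by rewrite (dvdn_leq (indexg_gt0 _ _) (indexgS G sHCK)) orbT.
split=> [|eq4]; first exact: leq_trans ge4K le_KH.
have eq4K' : cdindex G 'C_G(H) = p ^ 4.
  by apply/eqP; rewrite eqn_leq ge4K andbT -eq4 le_KH.
have eHCK : gval H = 'C_G('C_G(H)).
  apply: eq_index_subg sHCK (subsetIl _ _) _; apply/eqP.
  rewrite -(eqn_pmul2l (indexg_gt0 G 'C_G(H))) [X in X == _]mulnC.
  by move: eq4K'; rewrite -eq4 /cdindex => ->.
have [[eCK _] | TK] := eq4K eq4K'.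
  have : 'C_G(H) \subset 'C_G('C_G(H)) by rewrite eCK.
  by rewrite -eHCK (negbTE nCH).
by split=> //; rewrite (center_subcent sKG) (setIidPr sCKK).
Qed.

Lemma cdindex_nonabelian_cases H :
    'Z(G) \proper H -> H \proper G -> ~~ abelian H -> ~~ ('C_G(H) \subset H) ->
  p ^ 4 <= cdindex G H /\
  (cdindex G H = p ^ 4 ->
   [/\ #|G : H| = p ^ 2, #|G : 'C_G(H)| = p ^ 2 & #|G : 'Z(G)| = p ^ 4]).
Proof.
rewrite !properE => /andP[sZH _] /andP[sHG nGH] nabH nCH.
have nprH : ~~ prime #|G : H|.
  by apply: contra nCH; apply: prime_index_subcent_sub.
have geH := psq_leq_index pZ sZH sHG nGH nprH.
have geHZ := psq_leq_center_index pZ sZH sHG nabH.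
have eGZH : #|G : 'Z(H)| = #|G : H| * #|H : 'Z(H)|.
  by rewrite Lagrange_index ?center_sub.
have leHK : #|(H * 'C_G(H))%g| <= #|G| by rewrite subset_leq_card ?mul_subG ?subsetIl.
(* By cdindex_mul_card, cdindex G H >= |G : Z(H)|, with equality iff H C_G(H) = G. *)
have eHKG := cdindex_mul_card sHG.
have geZH : #|G : 'Z(H)| <= cdindex G H.
  by rewrite -(leq_pmul2l (cardG_gt0 G)) -eHKG mulnC leq_mul2r leHK orbT.
have p2_gt0 : 0 < p ^ 2 by rewrite expn_gt0 p_gt0.
have p4 : p ^ 4 = p ^ 2 * p ^ 2 by rewrite -expnD.
have le4 : p ^ 2 * p ^ 2 <= #|G : H| * #|H : 'Z(H)| := leq_mul geH geHZ.
split=> [|eq4]; first by rewrite p4 (leq_trans le4) // -eGZH.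
have eGZH4 : #|G : 'Z(H)| = p ^ 4.
  by apply/eqP; rewrite eqn_leq -{1}eq4 geZH p4 eGZH le4.
have [eGH _] := leq_mul_eq p2_gt0 p2_gt0 geH geHZ (etrans (esym eGZH) (etrans eGZH4 p4)).
have eHK : #|(H * 'C_G(H))%g| = #|G|.
  by apply/eqP; rewrite -(eqn_pmul2l (cdindex_gt0 G H)) eHKG eq4 -eGZH4 mulnC.
have defG : (H * 'C_G(H))%g = G.
  by apply/eqP; rewrite eqEcard mul_subG ?subsetIl // eHK leqnn.
have eZ : 'Z(H) = 'Z(G).
  apply/eqP; rewrite eqEsubset (center_sub_center sZH sHG) andbT.
  rewrite subsetI (subset_trans (center_sub H) sHG) -defG -cent_joinEr ?subsetIr //.
  rewrite centY subsetI subsetIr centsC.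
  exact: subset_trans (subsetIr _ _) (centS (center_sub H)).
split=> //; last by rewrite -eZ.
apply/eqP; rewrite -(eqn_pmul2l p2_gt0) -{1}eGH -p4; apply/eqP; exact: eq4.
Qed.

Lemma cdindex_cases H : 'Z(G) \proper H -> H \proper G ->
  p ^ 4 <= cdindex G H /\
  (cdindex G H = p ^ 4 ->
   [\/ 'C_G(H) = H /\ #|G : H| = p ^ 2,
       gval H \in Tsubs G p,
       'C_G(H) \in Tsubs G p /\ gval H = 'Z('C_G(H)) |
       [/\ #|G : H| = p ^ 2, #|G : 'C_G(H)| = p ^ 2 & #|G : 'Z(G)| = p ^ 4]]).
Proof.
move=> ZH HG; have [sCH | nCH] := boolP ('C_G(H) \subset H).
  have [ge4 eq4] := cdindex_cent_sub_cases ZH HG sCH.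
  by split=> // /eq4[]; [constructor 1 | constructor 2].
have [aH | nabH] := boolP (abelian H).
  have [ge4 eq4] := cdindex_abelian_cases ZH HG aH nCH.
  by split=> // /eq4; constructor 3.
have [ge4 eq4] := cdindex_nonabelian_cases ZH HG nabH nCH.
by split=> // /eq4; constructor 4.
Qed.

End CDIndexLowerBound.

Section SmallCenterIndex.
Local Open Scope nat_scope.
Variable gT : finGroupType.
Implicit Types G H A : {group gT}.

Lemma CD_abelian G : abelian G -> CD G = [set gval G].
Proof.
move=> /center_idP eZ; apply: (@CD_by_cdindex _ _ 1) => [H _ _ | H sZH sHG _ | Y | ].
- exact: cdindex_gt0.
- by rewrite inE eqEsubset sHG -{1}eZ.
- by rewrite inE => /eqP->; exists G; rewrite // cdindexG eZ indexgg.
- by apply/set0Pn; exists (gval G); rewrite inE.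
Qed.

Lemma CD_center_index_sq G A p :
    prime p -> max_selfcent G A -> #|G : 'Z(G)| = p ^ 2 ->
  exists Ai : 'I_p -> {group gT},
    [/\ CD G = [set 'Z(G); gval A; gval G] :|: [set gval (Ai i) | i : 'I_p],
        quasi_antichain (CD G) p.+1 & forall i, abelian (Ai i)].
Proof.
move=> p_pr msA iGZ; have [sAG cA aA sZA] := max_selfcentP msA.
have nZG : 'Z(G) != G :> {set gT}.
  apply/eqP => eZG; have := prime_gt1 p_pr.
  by move: iGZ; rewrite eZG indexgg (expnS p 1) expn1; nia.
have cdH H : 'Z(G) \subset H -> H \subset G -> cdindex G H = p ^ 2.
  move=> sZH sHG; have [-> | -> | ZHG] := between_cases sZH sHG.
  - by rewrite cdindexZ.
  - by rewrite cdindexG.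
  have [iGH _] := between_center_index p_pr iGZ ZHG.
  have aH := between_abelian p_pr iGZ ZHG.
  have sHC : H \subset 'C_G(H) by rewrite subsetI sHG.
  have prH : prime #|G : H| by rewrite iGH.
  have [eC | eC] := prime_index_between sHC (subsetIl _ _) prH.
    by rewrite /cdindex eC iGH mulnn.
  move: ZHG; rewrite in_between => /andP[/properP[_ [x Hx nZx]] _].
  by case/negP: nZx; apply: subsetP (subcent_eq_center sHG eC) x Hx.
have defCD : CD G = 'Z(G) |: (gval G |: between 'Z(G) G).
  apply: (@CD_by_cdindex _ _ (p ^ 2)) => [H sZH sHG | H sZH sHG _ | Y | ].
  - by rewrite cdH.
  - by rewrite !in_setU1; case: (between_cases sZH sHG) => ->; rewrite ?eqxx ?orbT.
  - rewrite !in_setU1 => /or3P[/eqP-> | /eqP-> | /between_group[H -> ZHG]].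
    + by exists 'Z(G)%G; rewrite //= center_sub cdindexZ.
    + by exists G; rewrite // cdindexG.
    + move: (ZHG); rewrite in_between => /andP[/proper_sub sZH /proper_sub sHG].
      by exists H; rewrite ?cdH.
  - by apply/set0Pn; exists 'Z(G); rewrite !inE eqxx.
apply: CD_between_shape => //; rewrite in_between !properEneq sZA sAG !andbT.
apply/andP; split.
  by apply: contra nZG => /eqP eZA; rewrite eZA -{1}cA -eZA subcent_center.
by apply: contra nZG => /eqP eAG; apply/eqP/center_idP; rewrite -eAG.
Qed.

End SmallCenterIndex.

Lemma abelian_join_subcent_center (gT : finGroupType) (A H G : {group gT}) :
  abelian A -> A <*> H = G -> A :&: 'C_G(H) \subset 'Z(G).
Proof.
move=> aA eAH; have sC : A :&: 'C_G(H) \subset 'C(A <*> H).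
  rewrite centY subsetI (subset_trans (subsetIl _ _) aA).
  exact: subset_trans (subsetIr _ _) (subsetIr _ _).
rewrite eAH in sC; rewrite subsetI sC andbT.
exact: subset_trans (subsetIr _ _) (subsetIl _ _).
Qed.

Section SelfCentralizingPrimeIndex.
Local Open Scope nat_scope.
Variable gT : finGroupType.
Implicit Types H X : {group gT}.
Variables (G A : {group gT}) (p : nat).
Hypotheses (p_pr : prime p) (msA : max_selfcent G A) (iGA : #|G : A| = p).
Hypothesis iGZ_gt : p ^ 2 < #|G : 'Z(G)|.

Let p_gt0 : 0 < p. Proof. exact: prime_gt0. Qed.
Let prA : prime #|G : A|. Proof. by rewrite iGA. Qed.

Lemma meet_center_index_gt X : X \subset G -> X :&: A \subset 'Z(G) -> p < #|G : X|.
Proof.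
move=> sXG sXAZ; have [sAG _ _ _] := max_selfcentP msA.
have eGA : #|A| * p = #|G| by rewrite -iGA Lagrange.
have le_XA : #|X| * #|A| <= #|G| * #|'Z(G)|.
  apply: leq_trans (card_mul_leq (mul_subG sXG sAG)) _.
  by rewrite leq_mul2l subset_leq_card ?orbT.
have le_X : #|X| <= p * #|'Z(G)|.
  by rewrite -(leq_pmul2r (cardG_gt0 A)); move: le_XA; rewrite -eGA; lia.
have pZ_gt0 : 0 < p * #|'Z(G)| by rewrite muln_gt0 p_gt0 cardG_gt0.
have le_GX : #|G| <= p * #|'Z(G)| * #|G : X| by rewrite -(Lagrange sXG) leq_mul2r le_X orbT.
have lt_GZ : #|'Z(G)| * (p * p) < #|G|.
  by rewrite -(Lagrange (center_sub G)) ltn_pmul2l ?cardG_gt0 // -(expnS p 1) expn1.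
rewrite -(ltn_pmul2l pZ_gt0); lia.
Qed.



Lemma cdindex_gt_sq H : 'Z(G) \subset H -> H \subset G -> gval H != A ->
  p ^ 2 < cdindex G H.
Proof.
move=> sZH sHG nHA; have [sAG cA aA sZA] := max_selfcentP msA.
have eqZ (X : {group gT}) : 'Z(G) \subset X -> X \subset 'Z(G) -> gval X = 'Z(G).
  by move=> sZX sXZ; apply/eqP; rewrite eqEsubset sXZ.
have [sHA | nsHA] := boolP (H \subset A).
  have sAC : A \subset 'C_G(H) by rewrite subsetI sAG centsC (subset_trans sHA aA).
  have [eCA | eCG] := prime_index_between sAC (subsetIl _ _) prA.
    have iAH : 1 < #|A : H|.
      by rewrite indexg_gt1; apply: contra nHA => sAH; rewrite eqEsubset sHA.
    by rewrite /cdindex eCA -(Lagrange_index sAG sHA) iGA (expnS p 1) expn1; nia.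
  by rewrite (eqZ _ sZH (subcent_eq_center sHG eCG)) cdindexZ.
have sAHG : A <*> H \subset G by rewrite join_subG sAG.
have [/= eAH | /= eAHG] := prime_index_between (joing_subl A H) sAHG prA.
  by case/negP: nsHA; rewrite -eAH joing_subr.
have sACZ := abelian_join_subcent_center aA eAHG.
have [sCA | nsCA] := boolP ('C_G(H) \subset A).
  have eCZ : 'C_G(H) = 'Z(G).
    by apply: eqZ (center_sub_subcent sHG) _; rewrite /= -(setIidPr sCA).
  by rewrite /cdindex eCZ (leq_trans iGZ_gt) ?leq_pmull.
have sACG : A <*> 'C_G(H) \subset G by rewrite join_subG sAG subsetIl.
have [/= eAC | /= eACG] := prime_index_between (joing_subl A 'C_G(H)) sACG prA.
  by case/negP: nsCA; rewrite -eAC joing_subr.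
have sHCC : H \subset 'C_G('C_G(H)) by rewrite subsetI sHG centsC subsetIr.
have sHAZ : H :&: A \subset 'Z(G).
  rewrite setIC; apply: subset_trans (setIS A sHCC) _.
  exact: abelian_join_subcent_center aA eACG.
have sCAZ : 'C_G(H) :&: A \subset 'Z(G) by rewrite setIC.
by rewrite /cdindex (expnS p 1) expn1 ltn_mul // meet_center_index_gt // subsetIl.
Qed.

Lemma CD_selfcent_prime_index : CD G = [set gval A].
Proof.
have [sAG cA _ _] := max_selfcentP msA.
have cdA : cdindex G A = p ^ 2 by rewrite /cdindex cA iGA mulnn.
apply: (@CD_by_cdindex _ _ (p ^ 2)) => [H sZH sHG | H sZH sHG cdH | Y | ].
- by case: (eqVneq (gval H) A) => [-> | nHA]; rewrite ?cdA // ltnW ?cdindex_gt_sq.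
- rewrite inE; apply/contraT => nHA.
  by have := cdindex_gt_sq sZH sHG nHA; rewrite cdH ltnn.
- by rewrite inE => /eqP->; exists A.
- by apply/set0Pn; exists (gval A); rewrite inE.
Qed.
End SelfCentralizingPrimeIndex.

Lemma in_Tsubs (gT : finGroupType) (G T : {group gT}) p :
  (gval T \in Tsubs G p) = [&& T \subset G, #|G : T| == p & #|G : 'Z(T)| == (p ^ 3)%N].
Proof. by rewrite inE groupP. Qed.

Section SelfCentralizingIndexSq.
Local Open Scope nat_scope.
Variable gT : finGroupType.
Implicit Types B H T : {group gT}.
Variables (G A : {group gT}) (p : nat).
Hypotheses (p_pr : prime p) (msA : max_selfcent G A) (iGA : #|G : A| = p ^ 2).
Hypothesis pZ : prime_divs_ge p #|G : 'Z(G)|.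

Let p_gt1 : 1 < p. Proof. exact: prime_gt1. Qed.

Let abelian_index B : B \subset G -> abelian B -> p ^ 2 <= #|G : B|.
Proof. by rewrite -iGA; apply: max_selfcent_abelian_index. Qed.

Let cdindex_cases_G := cdindex_cases p_pr pZ abelian_index.

Let Tsubs_group V : V \in Tsubs G p -> group_set V.
Proof. by rewrite inE => /andP[]. Qed.

Let Asubs_group V : V \in Asubs G A p -> group_set V.
Proof. by rewrite inE => /andP[]. Qed.

Lemma cdindexA : cdindex G A = p ^ 4.
Proof. by have [_ cA _ _] := max_selfcentP msA; rewrite /cdindex cA iGA -expnD. Qed.

Lemma cdindex_ge4 : p ^ 4 <= #|G : 'Z(G)| ->
  forall H, 'Z(G) \subset H -> H \subset G -> p ^ 4 <= cdindex G H.
Proof.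
move=> le4 H sZH sHG; have [-> | -> | ] := between_cases sZH sHG.
- by rewrite cdindexZ.
- by rewrite cdindexG.
by rewrite in_between => /andP[ZH HG]; case: (cdindex_cases_G ZH HG).
Qed.

Lemma CD_center_index_lt4 : #|G : 'Z(G)| < p ^ 4 -> CD G = [set 'Z(G); gval G].
Proof.
move=> lt4; have gt_ZG H : gval H \in between 'Z(G) G -> #|G : 'Z(G)| < cdindex G H.
  by rewrite in_between => /andP[ZH HG]; apply: leq_trans lt4 (cdindex_cases_G ZH HG).1.
apply: (@CD_by_cdindex _ _ #|G : 'Z(G)|) => [H sZH sHG | H sZH sHG cdH | Y | ].
- have [-> | -> | /gt_ZG/ltnW //] := between_cases sZH sHG.
  + by rewrite cdindexZ.
  + by rewrite cdindexG.
- rewrite !inE; have [-> | -> | /gt_ZG] := between_cases sZH sHG; rewrite ?eqxx ?orbT //.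
  by rewrite cdH ltnn.
- rewrite !inE => /orP[] /eqP->; first by exists 'Z(G)%G; rewrite //= center_sub cdindexZ.
  by exists G; rewrite ?cdindexG.
- by apply/set0Pn; exists 'Z(G); rewrite !inE eqxx.
Qed.

Section IndexPSubgroups.
Variable T : {group gT}.
Hypotheses (le4 : p ^ 4 <= #|G : 'Z(G)|) (TT : gval T \in Tsubs G p).

Lemma Tsubs_cent :
  [/\ 'C_G(T) = 'Z(T), 'C_G('Z(T)) = T & #|T : 'Z(T)| = p ^ 2].
Proof.
move: TT; rewrite in_Tsubs => /and3P[sTG /eqP iGT /eqP iGZT].
have nZTZ : ~~ ('Z(T) \subset 'Z(G)).
  apply/negP => sZTZ; have := dvdn_leq (indexg_gt0 _ _) (indexgS G sZTZ).
  by rewrite iGZT => /(leq_trans le4); rewrite leq_exp2l.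
have prT : prime #|G : T| by rewrite iGT.
have [eCT eCZT] := prime_index_center_cent sTG prT nZTZ; split=> //.
have := Lagrange_index sTG (center_sub T); rewrite iGT iGZT (expnS p 2) => /eqP.
by rewrite eqn_pmul2l ?prime_gt0 // => /eqP.
Qed.

Lemma cdindex_Tsubs : cdindex G T = p ^ 4 /\ cdindex G 'Z(T) = p ^ 4.
Proof.
have [eCT eCZT _] := Tsubs_cent.
move: TT; rewrite in_Tsubs => /and3P[_ /eqP iGT /eqP iGZT].
by rewrite /cdindex eCT eCZT iGT iGZT -expnS mulnC -expnS.
Qed.

Lemma center_sub_Tsubs : 'Z(G) \subset 'Z(T).
Proof.
have [eCT _ _] := Tsubs_cent; rewrite -eCT center_sub_subcent //.
by move: TT; rewrite in_Tsubs => /andP[].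
Qed.

Lemma between_Tsubs B :
  gval B \in between 'Z(T) T -> 'C_G(B) = B /\ #|G : B| = p ^ 2.
Proof.
move=> ZBT; have [_ _ iTZ] := Tsubs_cent.
move: TT; rewrite in_Tsubs => /and3P[sTG /eqP iGT _].
have [iTB _] := between_center_index p_pr iTZ ZBT.
have aB := between_abelian p_pr iTZ ZBT.
have /andP[ZTB BT] : ('Z(T) \proper B) && (B \proper T) by rewrite -in_between.
have sBG : B \subset G := subset_trans (proper_sub BT) sTG.
have iGB : #|G : B| = p ^ 2.
  by rewrite -(Lagrange_index sTG (proper_sub BT)) iGT iTB mulnn.
have sBC : B \subset 'C_G(B) by rewrite subsetI sBG.
have ZB : 'Z(G) \proper B := sub_proper_trans center_sub_Tsubs ZTB.
have [ge4 _] := cdindex_cases_G ZB (proper_sub_trans BT sTG).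
have p2_gt0 : 0 < p ^ 2 by rewrite expn_gt0 ltnW.
have iGC : #|G : 'C_G(B)| = p ^ 2.
  have le_CB : #|G : 'C_G(B)| <= #|G : B| := dvdn_leq (indexg_gt0 _ _) (indexgS G sBC).
  rewrite /cdindex iGB in ge4; apply/eqP; rewrite eqn_leq -{1}iGB le_CB /=.
  by rewrite -(leq_pmul2l p2_gt0) -expnD.
split=> //; symmetry; apply: eq_index_subg sBC (subsetIl _ _) _.
by rewrite iGB iGC.
Qed.

Lemma sub_Tsubs H : p ^ 4 < #|G : 'Z(G)| ->
  'Z(G) \subset H -> H \subset G -> cdindex G H = p ^ 4 -> H \subset T.
Proof.
(* H <*> T also minimises cdindex, T is maximal in G, and G does not. *)
move=> lt4 sZH sHG cdH; have [cdT _] := cdindex_Tsubs.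
move: TT; rewrite in_Tsubs => /and3P[sTG /eqP iGT _].
have sZT := subset_trans center_sub_Tsubs (center_sub T).
have [_ cdHT] := cdindex_min_meet_join (cdindex_ge4 le4) sZH sHG sZT sTG cdH cdT.
have sHTG : H <*> T \subset G by rewrite join_subG sHG.
have prT : prime #|G : T| by rewrite iGT.
have [/= eHT | /= eHTG] := prime_index_between (joing_subr H T) sHTG prT.
  by have := joing_subl H T; rewrite eHT.
by move: lt4; rewrite -cdHT eHTG cdindexG ltnn.
Qed.

End IndexPSubgroups.

Lemma CD_center_index_eq4 : #|G : 'Z(G)| = p ^ 4 ->
  CD G = 'Z(G) |: [set 'Z(T) | T in Tsubs G p]
         :|: ((A : {set gT}) |: Asubs G A p) :|: Tsubs G p :|: [set (G : {set gT})].
Proof.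
move=> iGZ; have le4 : p ^ 4 <= #|G : 'Z(G)| by rewrite iGZ.
have [sAG cA _ _] := max_selfcentP msA.
apply: (@CD_by_cdindex _ _ (p ^ 4)) => [| H sZH sHG cdH | Y | ].
- exact: cdindex_ge4.
- rewrite !inE; have [-> | -> | ] := between_cases sZH sHG; rewrite ?eqxx ?orbT //.
  rewrite in_between => /andP[ZH HG]; have [_ /(_ cdH)] := cdindex_cases_G ZH HG.
  case=> [[eC iH] | TH | [TC eH] | [iH iC _]].
  + case: (eqVneq (gval H) A) => [-> | _]; first by rewrite /= !orbT.
    by rewrite groupP sHG eC iH !eqxx /= !orbT.
  + by move: TH; rewrite inE => ->; rewrite !orbT.
  + have -> : gval H \in [set 'Z(T) | T in Tsubs G p] by apply/imsetP; exists 'C_G(H).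
    by rewrite /= !orbT.
  + case: (eqVneq (gval H) A) => [-> | _]; first by rewrite /= !orbT.
    by rewrite groupP sHG iC iH !eqxx /= !orbT.
- case/setUP=> [/setUP[/setUP[/setU1P[-> | ZT] | /setU1P[-> | AB]] | TS] | /set1P->].
  + by exists 'Z(G)%G; rewrite //= center_sub cdindexZ.
  + case/imsetP: ZT => _ /(mem_group_set Tsubs_group)[T -> TT] ->.
    exists 'Z(T)%G => //; have [_ cdZT] := cdindex_Tsubs le4 TT; split=> //.
    by move: TT; rewrite in_Tsubs => /andP[/(subset_trans (center_sub T))].
  + by exists A; rewrite ?cdindexA.
  + have [B -> BA] := mem_group_set Asubs_group AB.
    move: BA; rewrite inE => /and5P[_ sBG _ /eqP iGB /eqP iGC]; exists B => //.
    by rewrite /cdindex iGB iGC -expnD.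
  + have [T -> TT] := mem_group_set Tsubs_group TS.
    exists T => //; split; last by have [] := cdindex_Tsubs le4 TT.
    by move: TT; rewrite in_Tsubs => /andP[].
  + by exists G; rewrite ?cdindexG.
- by apply/set0Pn; exists (gval G); rewrite !inE eqxx !orbT.
Qed.

Lemma card_Asubs_ge : #|G : 'Z(G)| = p ^ 4 -> 0 < #|Tsubs G p| -> p <= #|Asubs G A p|.
Proof.
move=> iGZ /card_gt0P[_ /(mem_group_set Tsubs_group)[T _ TT]].
have le4 : p ^ 4 <= #|G : 'Z(G)| by rewrite iGZ.
have [_ _ iTZ] := Tsubs_cent le4 TT.
have sTG : T \subset G by move: TT; rewrite in_Tsubs => /andP[].
have sub : between 'Z(T) T \subset gval A |: Asubs G A p.
  apply/subsetP => _ /between_group[B -> ZBT].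
  have [eC iGB] := between_Tsubs le4 TT ZBT.
  have sBG : B \subset G.
    by move: ZBT; rewrite in_between => /andP[_ /proper_sub/subset_trans->].
  rewrite !inE; case: (eqVneq (gval B) A) => //= _.
  by rewrite groupP sBG eC iGB eqxx.
move: (subset_leq_card sub); rewrite cardsU1 (card_between p_pr iTZ).
by case: (_ \notin _); rewrite ?add1n ?add0n ?ltnS // => /ltnW.
Qed.

Lemma mem_Tsubs_lattice T H : p ^ 4 < #|G : 'Z(G)| -> gval T \in Tsubs G p ->
    'Z(G) \subset H -> H \subset G -> cdindex G H = p ^ 4 ->
  gval H \in 'Z(T) |: (gval T |: between 'Z(T) T).
Proof.
move=> lt4 TT sZH sHG cdH; have le4 := ltnW lt4.
have sHT := sub_Tsubs le4 TT lt4 sZH sHG cdH.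
have [_ _ iTZ] := Tsubs_cent le4 TT.
move: (TT); rewrite in_Tsubs => /and3P[sTG /eqP iGT /eqP iGZT].
have [eHZ | eHG | ] := between_cases sZH sHG.
- by move: lt4; rewrite -cdH eHZ cdindexZ ltnn.
- by move: lt4; rewrite -cdH eHG cdindexG ltnn.
rewrite in_between => /andP[ZH HG]; have [_ /(_ cdH)] := cdindex_cases_G ZH HG.
case=> [[eC iH] | TH | [TC eH] | [_ _ iGZ]]; rewrite !in_setU1.
- have sZTH : 'Z(T) \subset H.
    rewrite -eC subsetI (subset_trans (center_sub T) sTG).
    exact: subset_trans (subsetIr T _) (centS sHT).
  have [eHZT | eHT | -> ] := between_cases sZTH sHT; rewrite ?orbT //.
    by move/eqP: iH; rewrite eHZT iGZT eqn_exp2l.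
  by move/eqP: iH; rewrite eHT iGT -{1}(expn1 p) eqn_exp2l.
- move: TH; rewrite in_Tsubs => /and3P[_ /eqP iGH _].
  by rewrite (eq_index_subg sHT sTG) ?iGH ?iGT ?eqxx ?orbT.
- have [cdC _] := cdindex_Tsubs le4 TC.
  have sCT := sub_Tsubs le4 TT lt4 (center_sub_subcent sHG) (subsetIl _ _) cdC.
  move: TC; rewrite inE => /and4P[_ _ /eqP iGC _].
  by rewrite eH (eq_index_subg sCT sTG) ?iGC ?iGT ?eqxx.
- by move: lt4; rewrite iGZ ltnn.
Qed.

Lemma CD_Tsubs T : p ^ 4 < #|G : 'Z(G)| -> gval T \in Tsubs G p ->
  exists Ai : 'I_p -> {group gT},
    [/\ CD G = [set 'Z(T); gval A; gval T] :|: [set gval (Ai j) | j : 'I_p],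
        quasi_antichain (CD G) p.+1 & forall j, abelian (Ai j)].
Proof.
move=> lt4 TT; have le4 := ltnW lt4; have [_ _ iTZ] := Tsubs_cent le4 TT.
have [sAG _ _ sZA] := max_selfcentP msA.
move: (TT); rewrite in_Tsubs => /and3P[sTG /eqP iGT /eqP iGZT].
have [cdT cdZT] := cdindex_Tsubs le4 TT.
have defCD : CD G = 'Z(T) |: (gval T |: between 'Z(T) T).
  apply: (@CD_by_cdindex _ _ (p ^ 4)) => [| H sZH sHG cdH | Y | ].
  - exact: cdindex_ge4.
  - exact: mem_Tsubs_lattice.
  - rewrite !in_setU1 => /or3P[/eqP-> | /eqP-> | /between_group[B -> ZBT]].
    + by exists 'Z(T)%G; rewrite //= (subset_trans (center_sub T)).
    + by exists T.
    + have [eC iGB] := between_Tsubs le4 TT ZBT; exists B => //.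
      move: ZBT; rewrite in_between => /andP[_ /proper_sub/subset_trans-> //].
      by rewrite /cdindex eC iGB -expnD.
  - by apply/set0Pn; exists 'Z(T); rewrite !inE eqxx.
apply: (CD_between_shape p_pr iTZ defCD).
move: (mem_Tsubs_lattice lt4 TT sZA sAG cdindexA); rewrite !in_setU1.
case/or3P=> [/eqP eAZ | /eqP eAT | //].
  by move/eqP: iGA; rewrite eAZ iGZT eqn_exp2l.
by move/eqP: iGA; rewrite eAT iGT -{1}(expn1 p) eqn_exp2l.
Qed.

Lemma CD_no_Tsubs : p ^ 4 < #|G : 'Z(G)| ->
    ~ (exists T : {group gT}, [/\ T \subset G, #|G : T| = p & #|G : 'Z(T)| = p ^ 3]) ->
  CD G = [set gval A].
Proof.
move=> lt4 noT; have le4 := ltnW lt4; have [sAG _ _ sZA] := max_selfcentP msA.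
have index_sq H : 'Z(G) \subset H -> H \subset G -> cdindex G H = p ^ 4 -> #|G : H| = p ^ 2.
  move=> sZH sHG cdH; have [eHZ | eHG | ] := between_cases sZH sHG.
  - by move: lt4; rewrite -cdH eHZ cdindexZ ltnn.
  - by move: lt4; rewrite -cdH eHG cdindexG ltnn.
  rewrite in_between => /andP[ZH HG]; have [_ /(_ cdH)] := cdindex_cases_G ZH HG.
  case=> [[_ iH] | TH | [TC _] | [_ _ iGZ]].
  - exact: iH.
  - by case: noT; exists H; move: TH; rewrite in_Tsubs => /and3P[? /eqP ? /eqP ?].
  - by case: noT; exists 'C_G(H)%G; move: TC; rewrite in_Tsubs => /and3P[? /eqP ? /eqP ?].
  - by move: lt4; rewrite iGZ ltnn.
apply: (@CD_by_cdindex _ _ (p ^ 4)) => [| H sZH sHG cdH | Y | ].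
- exact: cdindex_ge4.
- have sZI : 'Z(G) \subset H :&: A by rewrite subsetI sZH.
  have sIG : H :&: A \subset G by rewrite subIset ?sHG.
  have [cdI _] := cdindex_min_meet_join (cdindex_ge4 le4) sZH sHG sZA sAG cdH cdindexA.
  have iI := index_sq _ sZI sIG cdI.
  have eIH := eq_index_subg (subsetIl H A) sHG (etrans iI (esym (index_sq H sZH sHG cdH))).
  have eIA := eq_index_subg (subsetIr H A) sAG (etrans iI (esym iGA)).
  by rewrite inE -eIH eIA.
- by rewrite inE => /eqP->; exists A; rewrite ?cdindexA.
- by apply/set0Pn; exists (gval A); rewrite inE.
Qed.

End SelfCentralizingIndexSq.

Lemma prime_divs_ge_center_index (gT : finGroupType) (G : {group gT}) p :
  smallest_prime_div p #|G| -> prime_divs_ge p #|G : 'Z(G)|.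
Proof. by case=> _ _ min_p; apply: prime_divs_ge_dvd min_p (dvdn_indexg _ _). Qed.

Theorem theorem2p1 (gT : finGroupType) (G A : {group gT}) (p : nat) :
  prime p -> max_selfcent G A ->
  (* 1 *)
  (abelian G -> CD G = [set (G : {set gT})]) /\
  (* 2 *)
  (#|G : 'Z(G)| = (p ^ 2)%N ->
     exists Ai : 'I_p -> {group gT},
       [/\ CD G = [set 'Z(G); (A : {set gT}); (G : {set gT})]
                   :|: [set (Ai i : {set gT}) | i : 'I_p],
           quasi_antichain (CD G) p.+1 &
           forall i, abelian (Ai i)]) /\
  (* 3 *)
  ((forall i, 2 < i -> #|G : A| = p -> #|G : 'Z(G)| = (p ^ i)%N ->
      CD G = [set (A : {set gT})]) /\
   (smallest_prime_div p #|G| -> #|G : A| = p -> (p ^ 2)%N < #|G : 'Z(G)| ->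
      CD G = [set (A : {set gT})])) /\
  (* 4 *)
  (#|G : A| = (p ^ 2)%N ->
   (* 4a *)
   ((#|G : 'Z(G)| = (p ^ 3)%N -> CD G = [set 'Z(G); (G : {set gT})]) /\
    (smallest_prime_div p #|G| -> (p ^ 2)%N < #|G : 'Z(G)| < (p ^ 4)%N ->
       CD G = [set 'Z(G); (G : {set gT})])) /\
   (* 4b *)
   (#|G : 'Z(G)| = (p ^ 4)%N ->
      CD G = 'Z(G) |: [set 'Z(T) | T in Tsubs G p]
             :|: ((A : {set gT}) |: Asubs G A p) :|: Tsubs G p :|: [set (G : {set gT})] /\
      (1 <= #|Tsubs G p| -> p <= #|Asubs G A p|)) /\
   (* 4c *)
   ((forall i (T : {group gT}), 4 < i -> #|G : 'Z(G)| = (p ^ i)%N ->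
       T \subset G -> #|G : T| = p -> #|G : 'Z(T)| = (p ^ 3)%N ->
       exists Ai : 'I_p -> {group gT},
         [/\ CD G = [set 'Z(T); (A : {set gT}); (T : {set gT})]
                     :|: [set (Ai j : {set gT}) | j : 'I_p],
             quasi_antichain (CD G) p.+1 &
             forall j, abelian (Ai j)]) /\
    (forall T : {group gT}, smallest_prime_div p #|G| -> (p ^ 4)%N < #|G : 'Z(G)| ->
       T \subset G -> #|G : T| = p -> #|G : 'Z(T)| = (p ^ 3)%N ->
       exists Ai : 'I_p -> {group gT},
         [/\ CD G = [set 'Z(T); (A : {set gT}); (T : {set gT})]
                     :|: [set (Ai j : {set gT}) | j : 'I_p],
             quasi_antichain (CD G) p.+1 &
             forall j, abelian (Ai j)])) /\
   (* 4d *)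
   ((forall i, 4 < i -> #|G : 'Z(G)| = (p ^ i)%N ->
       ~ (exists T : {group gT},
            [/\ T \subset G, #|G : T| = p & #|G : 'Z(T)| = (p ^ 3)%N]) ->
       CD G = [set (A : {set gT})]) /\
    (smallest_prime_div p #|G| -> (p ^ 4)%N < #|G : 'Z(G)| ->
       ~ (exists T : {group gT},
            [/\ T \subset G, #|G : T| = p & #|G : 'Z(T)| = (p ^ 3)%N]) ->
       CD G = [set (A : {set gT})]))).
Proof.
move=> p_pr msA; have p_gt1 := prime_gt1 p_pr.
have pZ_pow i : #|G : 'Z(G)| = (p ^ i)%N -> prime_divs_ge p #|G : 'Z(G)|.
  by move->; apply: prime_divs_ge_pow.
have pow_lt i j : i < j -> #|G : 'Z(G)| = (p ^ j)%N -> (p ^ i)%N < #|G : 'Z(G)|.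
  by move=> ij ->; rewrite ltn_exp2l.
have inT (T : {group gT}) :
    T \subset G -> #|G : T| = p -> #|G : 'Z(T)| = (p ^ 3)%N -> gval T \in Tsubs G p.
  by move=> sTG iGT iGZT; rewrite in_Tsubs sTG iGT iGZT !eqxx.
split; first exact: CD_abelian.
split; first exact: CD_center_index_sq.
split.
  split=> [i i_gt2 iGA /(pow_lt 2 i i_gt2) | _ iGA] iGZ_gt;
    exact: CD_selfcent_prime_index p_pr msA iGA iGZ_gt.
move=> iGA; split; [split | split; [| split; [split | split]]].
- move=> iGZ; apply: CD_center_index_lt4 p_pr msA iGA (pZ_pow _ iGZ) _.
  by rewrite iGZ ltn_exp2l.
- move=> /prime_divs_ge_center_index pZ /andP[_].
  exact: CD_center_index_lt4 p_pr msA iGA pZ.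
- move=> iGZ; have pZ := pZ_pow _ iGZ; split.
    exact: CD_center_index_eq4 p_pr msA iGA pZ iGZ.
  exact: card_Asubs_ge p_pr msA iGA pZ iGZ.
- move=> i T i_gt4 /[dup] /pZ_pow pZ /(pow_lt 4 i i_gt4) lt4 sTG iGT iGZT.
  exact: CD_Tsubs p_pr msA iGA pZ T lt4 (inT T sTG iGT iGZT).
- move=> T /prime_divs_ge_center_index pZ lt4 sTG iGT iGZT.
  exact: CD_Tsubs p_pr msA iGA pZ T lt4 (inT T sTG iGT iGZT).
- move=> i i_gt4 /[dup] /pZ_pow pZ /(pow_lt 4 i i_gt4).
  exact: CD_no_Tsubs p_pr msA iGA pZ.
- move=> /prime_divs_ge_center_index pZ.
  exact: CD_no_Tsubs p_pr msA iGA pZ.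
Qed.
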